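(* Let $g(t)$, $t\in[0,T)$, be the maximal Ricci flow solution on $S^1\times S^3$ starting from a metric $g_0=\phi^2dz^2+a^2\omega^1\otimes\omega^1+b^2\omega^2\otimes\omega^2+c^2\omega^3\otimes\omega^3$ with $a\le b\le c$ at $t=0$. Suppose that at time $t=0$ we have $0<a$ and $1\le \max_s\left(\frac{c}{a}\right)\le\lambda$ for some constant $\lambda\ge1$. Then $1\le \frac{c}{a}\le\lambda$ for all $(z,t)\in S^1\times[0,T)$.
   Context: $S^3=SU(2)$ carries a global left-invariant frame $E_1,E_2,E_3$ with $[E_i,E_j]=-2\epsilon_{ijk}E_k$ and dual coframe $\omega^i$; $z\in S^1=[0,2\pi)$ and $\phi,a,b,c$ are positive smooth $2\pi$-periodic functions. The Ricci flow $\partial_tg=-2\mathrm{Ric}(g)$ preserves this form, with $\phi,a,b,c$ depending on $(z,t)$; $s$ is the arclength coordinate $ds=\phi\,dz$. *)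

(* Honest frame-based definition of the Ricci tensor for metrics on
   S^1 x SU(2) of the form  g = phi^2 dz^2 + a^2 w1^2 + b^2 w2^2 + c^2 w3^2,
   computed in the global frame X_0 = d/dz, X_i = E_i (i=1,2,3) with
   [E_i,E_j] = -2 eps_ijk E_k, [d/dz, E_i] = 0, via the Koszul formula. *)
From Stdlib Require Import Reals Lra Arith.
From Coquelicot Require Import Coquelicot.
Open Scope R_scope.

Definition sum4 (F : nat -> R) : R := F 0%nat + F 1%nat + F 2%nat + F 3%nat.

Definition eps3 (i j k : nat) : R :=
  match i, j, k return R with
  | S O, S (S O), S (S (S O)) => 1
  | S (S O), S (S (S O)), S O => 1
  | S (S (S O)), S O, S (S O) => 1
  | S O, S (S (S O)), S (S O) => -1
  | S (S (S O)), S (S O), S O => -1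
  | S (S O), S O, S (S (S O)) => -1
  | _, _, _ => 0
  end.

(* structure constants: [X_A, X_B] = sum_E cst E A B X_E *)
Definition cst (E A B : nat) : R := -2 * eps3 A B E.

(* action of the frame field X_A on a function of z alone
   (metric coefficients do not depend on the S^3 point, E_i f = 0) *)
Definition Xd (A : nat) (f : R -> R) (z : R) : R :=
  if Nat.eqb A 0 then Derive f z else 0.

Definition gm (gd : nat -> R -> R) (A B : nat) (z : R) : R :=
  if Nat.eqb A B then gd A z else 0.

(* Koszul formula: koszul A B C = g(nabla_{X_A} X_B, X_C) *)
Definition koszul (gd : nat -> R -> R) (A B C : nat) (z : R) : R :=
  / 2 * ( Xd A (gm gd B C) z + Xd B (gm gd A C) z - Xd C (gm gd A B) z
        + sum4 (fun E => cst E A B * gm gd E C z)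
        - sum4 (fun E => cst E A C * gm gd E B z)
        - sum4 (fun E => cst E B C * gm gd E A z) ).

(* Christoffel symbols: nabla_{X_A} X_B = sum_C chris C A B X_C *)
Definition chris (gd : nat -> R -> R) (C A B : nat) (z : R) : R :=
  koszul gd A B C z / gd C z.

(* Ricci tensor Ric(X_B, X_D) = trace (X |-> R(X, X_B) X_D),
   R(X,Y) = nabla_X nabla_Y - nabla_Y nabla_X - nabla_[X,Y] *)
Definition ricci (gd : nat -> R -> R) (B D : nat) (z : R) : R :=
  sum4 (fun A =>
      Xd A (chris gd A B D) z - Xd B (chris gd A A D) z
    + sum4 (fun E => chris gd E B D z * chris gd A A E z
                     - chris gd E A D z * chris gd A B E z)
    - sum4 (fun E => cst E A B * chris gd A E D z)).

Definition ansatz (phi a b c : R -> R -> R) (t : R) : nat -> R -> R :=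
  fun A z => match A return R with
             | O => (phi z t) ^ 2
             | S O => (a z t) ^ 2
             | S (S O) => (b z t) ^ 2
             | _ => (c z t) ^ 2
             end.

Definition pz (f : R -> R -> R) : R -> R -> R :=
  fun z t => Derive (fun x => f x t) z.
Definition pt (f : R -> R -> R) : R -> R -> R :=
  fun z t => Derive (fun s => f z s) t.

Fixpoint iterD (w : list bool) (f : R -> R -> R) : R -> R -> R :=
  match w with
  | nil => f
  | cons true w' => pz (iterD w' f)
  | cons false w' => pt (iterD w' f)
  end.

Definition smooth_on (D : R -> R -> Prop) (f : R -> R -> R) : Prop :=
  forall (w : list bool) (z t : R), D z t ->
    ex_derive (fun x => iterD w f x t) z /\
    ex_derive (fun s => iterD w f z s) t /\
    continuous (fun p : R * R => iterD w f (fst p) (snd p)) (z, t).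

Definition ricci_flow_sol (phi a b c : R -> R -> R) (T : Rbar) : Prop :=
  (exists eps : R, 0 < eps /\
     forall f, (f = phi \/ f = a \/ f = b \/ f = c) ->
       smooth_on (fun z t => - eps < t /\ Rbar_lt (Finite t) T) f) /\
  (forall z t, 0 <= t -> Rbar_lt (Finite t) T ->
     phi (z + 2 * PI) t = phi z t /\ a (z + 2 * PI) t = a z t /\
     b (z + 2 * PI) t = b z t /\ c (z + 2 * PI) t = c z t) /\
  (forall z t, 0 <= t -> Rbar_lt (Finite t) T ->
     0 < phi z t /\ 0 < a z t /\ 0 < b z t /\ 0 < c z t) /\
  (forall z t, 0 <= t -> Rbar_lt (Finite t) T ->
     forall A B : nat, (A < 4)%nat -> (B < 4)%nat ->
       Derive (fun s => gm (ansatz phi a b c s) A B z) t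
       = -2 * ricci (ansatz phi a b c t) A B z).

From Stdlib Require Import Reals Lra Lia Psatz Classical ClassicalEpsilon FunctionalExtensionality.
From Coquelicot Require Import Coquelicot.
Open Scope R_scope.

(* The Koszul formula gives the Ricci tensor of the ansatz, and with it the evolution of
   a log-ratio u = ln (x / y) of two SU(2) coefficients, w being the third one:
     u_t = u_zz / phi^2 + (terms in u_z) + 4 (y^2 - x^2) (y^2 + x^2 - w^2) / (x^2 y^2 w^2).
   The reaction term is negative when y < x and w <= x.  Periodicity in z makes the circle
   compact, so there is a first time at which u - eps (1 + t) reaches a bound K >= u (., 0);
   the touching point is a spatial maximum, where u_z = 0, u_zz <= 0 and u_t >= eps,
   contradicting the equation.  Applied to max (ln (a/c), ln (b/c)) with K = 0 this preserves
   a, b <= c; then, since b <= c, applied to ln (c/a) with K = ln lambda it preserves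
   c/a <= lambda. *)

Lemma is_derive_Ropp (f : R -> R) x l : is_derive f x l -> is_derive (fun y => - f y) x (- l).
Proof. exact (is_derive_opp f x l). Qed.

Lemma is_derive_pos_increasing (f : R -> R) x l : is_derive f x l -> 0 < l ->
  exists d, 0 < d /\ forall h, 0 < h < d -> f (x - h) < f x < f (x + h).
Proof.
  intros Hf Hl. apply is_derive_Reals in Hf.
  destruct (Hf (l / 2)) as [d Hd]; [lra|].
  exists d; split; [apply cond_pos|]. intros h Hh.
  assert (Hslope : forall k, k <> 0 -> Rabs k < d -> 0 < (f (x + k) - f x) / k).
  { intros k Hk Hkd. specialize (Hd k Hk Hkd). apply Rabs_def2 in Hd. lra. }
  pose proof (Hslope h ltac:(lra) ltac:(rewrite Rabs_right; lra)) as Hr.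
  pose proof (Hslope (- h) ltac:(lra) ltac:(rewrite Rabs_left; lra)) as Hl'.
  replace (x + - h) with (x - h) in Hl' by ring.
  apply Rdiv_pos_cases in Hr; apply Rdiv_pos_cases in Hl'. lra.
Qed.

Lemma max_is_derive_0 (G : R -> R) x l : is_derive G x l -> (forall y, G y <= G x) -> l = 0.
Proof.
  intros HG Hmax. destruct (Rtotal_order l 0) as [Hl|[Hl|Hl]]; auto; exfalso.
  - destruct (is_derive_pos_increasing _ _ _ (is_derive_Ropp _ _ _ HG)) as [d [Hd Hinc]]; [lra|].
    specialize (Hinc (d / 2) ltac:(lra)). specialize (Hmax (x - d / 2)). lra.
  - destruct (is_derive_pos_increasing _ _ _ HG Hl) as [d [Hd Hinc]].
    specialize (Hinc (d / 2) ltac:(lra)). specialize (Hmax (x + d / 2)). lra.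
Qed.

Lemma max_is_derive2_le0 (G G' : R -> R) x l :
  (forall y, is_derive G y (G' y)) -> is_derive G' x l -> (forall y, G y <= G x) -> l <= 0.
Proof.
  intros HG HG' Hmax. apply Rnot_lt_le; intro Hl.
  pose proof (max_is_derive_0 G x (G' x) (HG x) Hmax) as H0.
  destruct (is_derive_pos_increasing _ _ _ HG' Hl) as [d [Hd Hinc]].
  destruct (MVT_cor2 G G' x (x + d / 2)) as [y [Hmvt Hy]];
    [lra | intros; apply is_derive_Reals, HG |].
  specialize (Hinc (y - x) ltac:(lra)). replace (x + (y - x)) with y in Hinc by ring.
  specialize (Hmax (x + d / 2)). nra.
Qed.

Lemma left_max_is_derive_ge0 (H : R -> R) x l r : is_derive H x l -> 0 < r ->
  (forall s, x - r < s < x -> H s <= H x) -> 0 <= l.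
Proof.
  intros HH Hr Hle. apply Rnot_lt_le; intro Hl.
  destruct (is_derive_pos_increasing _ _ _ (is_derive_Ropp _ _ _ HH)) as [d [Hd Hinc]]; [lra|].
  set (h := Rmin d r / 2).
  assert (0 < Rmin d r) by (apply Rmin_pos; lra).
  pose proof (Rmin_l d r). pose proof (Rmin_r d r).
  specialize (Hinc h ltac:(unfold h; lra)). specialize (Hle (x - h) ltac:(unfold h; lra)). lra.
Qed.

Lemma ln_le_inv x y : 0 < x -> 0 < y -> ln x <= ln y -> x <= y.
Proof.
  intros Hx Hy H. apply Rnot_lt_le; intro Hlt. pose proof (ln_increasing y x Hy Hlt). lra.
Qed.

Definition continuous2 (F : R -> R -> R) (z t : R) : Prop :=
  continuous (fun p : R * R => F (fst p) (snd p)) (z, t).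

Section Continuous2.
Variables (F G : R -> R -> R) (z t : R).
Hypothesis HF : continuous2 F z t.
Hypothesis HG : continuous2 G z t.

Lemma continuous2_plus : continuous2 (fun x s => F x s + G x s) z t.
Proof. exact (continuous_plus _ _ _ HF HG). Qed.

Lemma continuous2_minus : continuous2 (fun x s => F x s - G x s) z t.
Proof. exact (continuous_plus _ _ _ HF (continuous_opp _ _ HG)). Qed.

Lemma continuous2_minus_time_affine (k : R) : continuous2 (fun x s => F x s - k * (1 + s)) z t.
Proof.
  apply (continuous_plus _ (fun p : R * R => - (k * (1 + snd p))) _ HF).
  apply (continuous_opp (fun p : R * R => k * (1 + snd p))).
  apply (continuous_mult (fun _ : R * R => k)); [apply continuous_const|].
  apply (continuous_plus (fun _ : R * R => 1)); [apply continuous_const | apply continuous_snd].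
Qed.

Lemma continuous2_ln : 0 < F z t -> continuous2 (fun x s => ln (F x s)) z t.
Proof. intros Hpos. apply (continuous_comp _ ln _ HF). now apply continuous_ln. Qed.

Lemma continuous2_Rmax : continuous2 (fun x s => Rmax (F x s) (G x s)) z t.
Proof.
  apply (continuous_ext (fun p => (F (fst p) (snd p) + G (fst p) (snd p)
                                   + Rabs (F (fst p) (snd p) - G (fst p) (snd p))) / 2)).
  - intros [x s]. simpl. unfold Rmax. destruct Rle_dec.
    + rewrite Rabs_left1 by lra. field.
    + rewrite Rabs_right by lra. field.
  - apply (continuous_mult (fun p : R * R => F (fst p) (snd p) + G (fst p) (snd p)
                                   + Rabs (F (fst p) (snd p) - G (fst p) (snd p))));
      [|apply continuous_const].
    apply (continuous_plus _ (fun p : R * R => Rabs (F (fst p) (snd p) - G (fst p) (snd p))));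
      [exact continuous2_plus|].
    apply (continuous_comp _ Rabs); [exact continuous2_minus | apply continuous_Rabs].
Qed.
End Continuous2.

Lemma continuous2_near (F : R -> R -> R) z t eps : continuous2 F z t -> 0 < eps ->
  exists d, 0 < d /\ forall x s, Rabs (x - z) < d -> Rabs (s - t) < d -> Rabs (F x s - F z t) < eps.
Proof.
  intros Hc He.
  destruct (proj2 (locally_2d_locally (fun x s => ball (F z t) eps (F x s)) z t)
              (proj1 (filterlim_locally _ _) Hc (mkposreal eps He))) as [d Hd].
  exists d; split; [apply cond_pos | exact Hd].
Qed.

Lemma periodic_shift_Z (f : R -> R) P : (forall z, f (z + P) = f z) ->
  forall (n : Z) z, f (z + P * IZR n) = f z.
Proof.
  intros Hp n. induction n as [|n IH|n IH] using Z.peano_ind; intro z.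
  - now rewrite Rmult_0_r, Rplus_0_r.
  - rewrite succ_IZR, <- (IH z), <- (Hp (z + P * IZR n)). f_equal; ring.
  - rewrite <- Z.sub_1_r, minus_IZR, <- (IH z), <- (Hp (z + P * (IZR n - 1))). f_equal; ring.
Qed.

Lemma periodic_representative (f : R -> R) : (forall z, f (z + 2 * PI) = f z) ->
  forall z, exists y, 0 <= y <= 2 * PI /\ f y = f z.
Proof.
  intros Hp z. pose proof PI_RGT_0 as Hpi.
  set (n := (up (z / (2 * PI)) - 1)%Z).
  destruct (archimed (z / (2 * PI))) as [Hup Hup'].
  assert (Hn : IZR n <= z / (2 * PI) < IZR n + 1) by (unfold n; rewrite minus_IZR; lra).
  assert (Hz : z = 2 * PI * (z / (2 * PI))) by (field; lra).
  exists (z + 2 * PI * IZR (- n)). split.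
  - rewrite opp_IZR. nra.
  - apply periodic_shift_Z, Hp.
Qed.

Lemma cluster_nonneg (F : R -> R -> R) tb (zs ts : nat -> R) :
  (forall z, continuous2 F z tb) ->
  (forall n, 0 <= zs n <= 2 * PI /\ tb <= ts n <= tb + / INR (S n) /\ 0 <= F (zs n) (ts n)) ->
  exists zb, 0 <= F zb tb.
Proof.
  intros Hc Hseq.
  destruct (Bolzano_Weierstrass zs (fun y => 0 <= y <= 2 * PI) (compact_P3 0 (2 * PI)))
    as [zb Hzb]; [intro n; apply Hseq|].
  exists zb. apply Rnot_lt_le; intro Hneg.
  destruct (continuous2_near F zb tb (- F zb tb) (Hc zb)) as [d [Hd Hnear]]; [lra|].
  destruct (archimed_cor1 d Hd) as [N [HN HN0]].
  destruct (Hzb (fun y => Rabs (y - zb) < d) N) as [p [HpN Hp]].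
  { exists (mkposreal d Hd). intros y Hy. exact Hy. }
  destruct (Hseq p) as (_ & Htp & Hpos).
  assert (Hsmall : / INR (S p) < d).
  { apply (Rle_lt_trans _ (/ INR N)); [|exact HN].
    apply Rinv_le_contravar; [apply lt_0_INR; lia | apply le_INR; lia]. }
  assert (Htp' : Rabs (ts p - tb) < d) by (rewrite Rabs_right; lra).
  specialize (Hnear _ _ Hp Htp'). apply Rabs_def2 in Hnear. lra.
Qed.

Lemma nonpos_of_neg_before (F : R -> R -> R) z tb : 0 < tb -> continuous2 F z tb ->
  (forall s, 0 <= s < tb -> F z s < 0) -> F z tb <= 0.
Proof.
  intros Htb Hc Hbelow. apply Rnot_lt_le; intro Hpos.
  destruct (continuous2_near F z tb (F z tb) Hc Hpos) as [d [Hd Hnear]].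
  set (s := tb - Rmin d tb / 2).
  assert (0 < Rmin d tb) by (apply Rmin_pos; lra).
  pose proof (Rmin_l d tb). pose proof (Rmin_r d tb).
  assert (Hz : Rabs (z - z) < d) by (rewrite Rminus_diag, Rabs_R0; lra).
  assert (Hs : Rabs (s - tb) < d) by (unfold s; rewrite Rabs_left; lra).
  specialize (Hnear z s Hz Hs). apply Rabs_def2 in Hnear.
  specialize (Hbelow s ltac:(unfold s; lra)). lra.
Qed.

Lemma periodic_nonneg_point (F : R -> R -> R) tb u :
  (forall z s, 0 <= s <= u -> F (z + 2 * PI) s = F z s) ->
  (forall z s, 0 <= s < tb -> F z s < 0) ->
  ~ (forall z s, 0 <= s <= u -> F z s < 0) ->
  exists p : R * R, 0 <= fst p <= 2 * PI /\ tb <= snd p <= u /\ 0 <= F (fst p) (snd p).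
Proof.
  intros Hper Hbelow Hneg. apply NNPP; intro Hnone. apply Hneg; intros z s Hs.
  apply Rnot_le_lt; intro Hzs.
  assert (Hs' : tb <= s) by (apply Rnot_lt_le; intro; specialize (Hbelow z s ltac:(lra)); lra).
  destruct (periodic_representative (fun y => F y s) (fun y => Hper y s Hs) z) as [y [Hy Ey]].
  apply Hnone. exists (y, s). cbn [fst snd]. cbv beta in Ey. rewrite Ey. repeat split; lra.
Qed.

Lemma first_contact (F : R -> R -> R) (T' : R) :
  (forall z s, 0 <= s <= T' -> continuous2 F z s) ->
  (forall z s, 0 <= s <= T' -> F (z + 2 * PI) s = F z s) ->
  (forall z, F z 0 < 0) ->
  forall z1 t1, 0 <= t1 <= T' -> 0 <= F z1 t1 ->
  exists zb tb, 0 < tb <= t1 /\ F zb tb = 0 /\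
    (forall z s, 0 <= s < tb -> F z s < 0) /\ (forall z, F z tb <= 0).
Proof.
  intros Hc Hper Hinit z1 t1 Ht1 Hz1.
  set (U := fun u => forall z s, 0 <= s <= u -> F z s < 0).
  assert (HU0 : U 0) by (intros z s Hs; replace s with 0 by lra; apply Hinit).
  assert (HU_lt : forall u, U u -> u < t1).
  { intros u HuF. apply Rnot_le_lt; intro. specialize (HuF z1 t1 ltac:(lra)). lra. }
  destruct (completeness U) as [tb [Hub Hlub]].
  { exists t1. intros u Hu. now apply Rlt_le, HU_lt. }
  { now exists 0. }
  assert (Htb0 : 0 <= tb) by (now apply Hub).
  assert (Htb1 : tb <= t1) by (apply Hlub; intros u Hu; now apply Rlt_le, HU_lt).
  assert (Hbelow : forall z s, 0 <= s < tb -> F z s < 0).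
  { intros z s Hs. apply NNPP; intro Hns.
    assert (tb <= s); [|lra]. apply Hlub. intros u HuF. apply Rnot_lt_le; intro Hsu.
    apply Hns, HuF. lra. }
  assert (Habove : forall n, exists p : R * R, 0 <= fst p <= 2 * PI /\
            tb <= snd p <= tb + / INR (S n) /\ 0 <= F (fst p) (snd p)).
  { intro n. assert (Hn : 0 < / INR (S n)) by (apply Rinv_0_lt_compat, lt_0_INR; lia).
    set (u := Rmin (tb + / INR (S n)) t1).
    assert (Hu : u <= tb + / INR (S n) /\ u <= t1) by (split; [apply Rmin_l | apply Rmin_r]).
    destruct (periodic_nonneg_point F tb u) as [p Hp]; auto.
    - intros z s Hs. apply Hper. lra.
    - intro HUu. pose proof (Hub u HUu) as Hutb. pose proof (HU_lt u HUu) as Hut1.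
      revert Hutb Hut1. unfold u. apply Rmin_case; intros; lra.
    - exists p. repeat split; lra. }
  destruct (choice _ Habove) as [seq Hseq].
  destruct (cluster_nonneg F tb (fun n => fst (seq n)) (fun n => snd (seq n))) as [zb Hzb].
  { intro z. apply Hc. lra. }
  { exact Hseq. }
  assert (Htb : 0 < tb).
  { destruct (Rle_lt_or_eq_dec 0 tb Htb0) as [|E]; [assumption|].
    subst tb. specialize (Hinit zb). lra. }
  assert (Hslice : forall z, F z tb <= 0)
    by (intro z; apply nonpos_of_neg_before; auto; apply Hc; lra).
  exists zb, tb. pose proof (Hslice zb). repeat split; auto; lra.
Qed.

Lemma max_principle (G : R -> R -> R) (K T' : R) :
  (forall z s, 0 <= s <= T' -> continuous2 G z s) ->
  (forall z s, 0 <= s <= T' -> G (z + 2 * PI) s = G z s) ->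
  (forall z, G z 0 <= K) ->
  (forall ep zb tb, 0 < ep -> 0 < tb <= T' -> K < G zb tb ->
     (forall z, G z tb <= G zb tb) ->
     (forall s, 0 <= s < tb -> G zb s - ep * s < G zb tb - ep * tb) -> False) ->
  forall z s, 0 <= s <= T' -> G z s <= K.
Proof.
  intros Hc Hper Hinit Htouch z s Hs.
  apply Rle_plus_epsilon. intros e He.
  set (ep := e / (1 + s)).
  assert (Hep : 0 < ep) by (unfold ep; apply Rdiv_lt_0_compat; lra).
  assert (Hes : ep * (1 + s) = e) by (unfold ep; field; lra).
  set (F := fun x r => (G x r - K) - ep * (1 + r)).
  destruct (Rlt_or_le (F z s) 0) as [Hneg|Hnn]; [unfold F in Hneg; lra|exfalso].
  destruct (first_contact F T') with (z1 := z) (t1 := s)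
    as (zb & tb & Htb & H0 & Hbelow & Hslice); unfold F in *; try lra.
  - intros x r Hr. apply continuous2_minus_time_affine, continuous2_minus;
      [auto | apply continuous_const].
  - intros x r Hr. now rewrite Hper.
  - intro x. specialize (Hinit x). lra.
  - assert (0 < ep * (1 + tb)) by (apply Rmult_lt_0_compat; lra).
    apply (Htouch ep zb tb Hep); try lra.
    + intro x. specialize (Hslice x). lra.
    + intros r Hr. specialize (Hbelow zb r Hr). lra.
Qed.

Definition coef (phi a b c : R -> R -> R) (A : nat) : R -> R -> R :=
  match A with O => phi | 1%nat => a | 2%nat => b | _ => c end.

Lemma ansatz_coef phi a b c t A z : ansatz phi a b c t A z = coef phi a b c A z t ^ 2.
Proof. now destruct A as [|[|[|A]]]. Qed.

Definition christoffel (phi a b c : R -> R -> R) (t : R) (C A B : nat) (z : R) : R :=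
  let g D := coef phi a b c D z t ^ 2 in
  let dg D := 2 * coef phi a b c D z t * pz (coef phi a b c D) z t in
  (/ 2 * ((if andb (A =? 0) (B =? C) then dg B else 0)
        + (if andb (B =? 0) (A =? C) then dg A else 0)
        - (if andb (C =? 0) (A =? B) then dg A else 0))
   - eps3 A B C * (g B + g C - g A)) / g C.

Definition pzz (f : R -> R -> R) : R -> R -> R := pz (pz f).

Definition ric_diag (p f g h : R -> R -> R) (z t : R) : R :=
  - f z t * pzz f z t / p z t ^ 2 + f z t * pz f z t * pz p z t / p z t ^ 3
  - f z t * pz f z t * (pz g z t / g z t + pz h z t / h z t) / p z t ^ 2
  + 2 * (f z t ^ 4 - (g z t ^ 2 - h z t ^ 2) ^ 2) / (g z t ^ 2 * h z t ^ 2).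

Lemma Derive_sq (f : R -> R) x : ex_derive f x ->
  Derive (fun y => f y ^ 2) x = 2 * f x * Derive f x.
Proof.
  intros Hf. apply is_derive_unique. auto_derive; [exact Hf|].
  change (Derive (fun y => f y) x) with (Derive f x). ring.
Qed.

Section AnsatzCurvature.
Variables (phi a b c : R -> R -> R) (t : R).
Hypothesis regular : forall f, f = phi \/ f = a \/ f = b \/ f = c -> forall z,
  ex_derive (fun x => f x t) z /\ ex_derive (fun x => pz f x t) z.
Hypothesis pos : forall z, 0 < phi z t /\ 0 < a z t /\ 0 < b z t /\ 0 < c z t.

Ltac coef_facts z :=
  destruct (pos z) as (?&?&?&?);
  destruct (regular phi ltac:(tauto) z) as [? _];
  destruct (regular a ltac:(tauto) z) as [? ?];
  destruct (regular b ltac:(tauto) z) as [? ?];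
  destruct (regular c ltac:(tauto) z) as [? ?].

Lemma chris_ansatz C A B : (C < 4)%nat -> (A < 4)%nat -> (B < 4)%nat ->
  chris (ansatz phi a b c t) C A B = christoffel phi a b c t C A B.
Proof.
  intros HC HA HB. apply functional_extensionality; intro z. coef_facts z.
  destruct C as [|[|[|[|C]]]]; try lia; destruct A as [|[|[|[|A]]]]; try lia;
  destruct B as [|[|[|[|B]]]]; try lia;
  cbv beta iota zeta delta [christoffel chris koszul Xd gm cst sum4 eps3 ansatz coef Nat.eqb andb];
  rewrite ?Derive_const, ?Derive_sq by assumption; unfold pz; field; lra.
Qed.

Lemma Derive_christoffel_0ii i z : (1 <= i <= 3)%nat ->
  let f := coef phi a b c i in
  Derive (christoffel phi a b c t 0 i i) z =
  - (pz f z t ^ 2 + f z t * pzz f z t) / phi z t ^ 2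
  + 2 * f z t * pz f z t * pz phi z t / phi z t ^ 3.
Proof.
  intros Hi f; unfold f; coef_facts z.
  destruct i as [|[|[|[|i]]]]; try lia;
    apply is_derive_unique;
    cbv beta iota zeta delta [christoffel coef eps3 Nat.eqb andb];
    (auto_derive; [repeat split; auto; intro; nra | unfold pzz, pz; field; lra]).
Qed.

Ltac compute_ricci z :=
  unfold ricci, sum4, Xd; cbv beta iota zeta delta [Nat.eqb];
  rewrite !chris_ansatz by lia;
  rewrite ?Derive_const, !Derive_christoffel_0ii by lia;
  coef_facts z;
  cbv beta iota zeta delta [christoffel eps3 coef Nat.eqb andb cst ric_diag];
  unfold pzz, pz; field; lra.

Lemma ricci_ansatz_11 z : ricci (ansatz phi a b c t) 1 1 z = ric_diag phi a b c z t.
Proof. compute_ricci z. Qed.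
Lemma ricci_ansatz_22 z : ricci (ansatz phi a b c t) 2 2 z = ric_diag phi b a c z t.
Proof. compute_ricci z. Qed.
Lemma ricci_ansatz_33 z : ricci (ansatz phi a b c t) 3 3 z = ric_diag phi c a b z t.
Proof. compute_ricci z. Qed.
End AnsatzCurvature.

Definition log_ratio (x y : R -> R -> R) (z t : R) : R := ln (x z t) - ln (y z t).
Definition log_ratio_z (x y : R -> R -> R) (z t : R) : R := pz x z t / x z t - pz y z t / y z t.
Definition log_ratio_zz (x y : R -> R -> R) (z t : R) : R :=
  pzz x z t / x z t - (pz x z t / x z t) ^ 2 - pzz y z t / y z t + (pz y z t / y z t) ^ 2.
Definition log_ratio_t (x y : R -> R -> R) (z t : R) : R := pt x z t / x z t - pt y z t / y z t.

Section LogRatioDerivatives.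
Variables (x y : R -> R -> R) (z t : R).
Hypothesis Hx : 0 < x z t.
Hypothesis Hy : 0 < y z t.

Lemma is_derive_log_ratio_z : ex_derive (fun r => x r t) z -> ex_derive (fun r => y r t) z ->
  is_derive (fun r => log_ratio x y r t) z (log_ratio_z x y z t).
Proof.
  intros. unfold log_ratio, log_ratio_z, pz. auto_derive; [repeat split; auto | field; lra].
Qed.

Lemma is_derive_log_ratio_zz : ex_derive (fun r => x r t) z -> ex_derive (fun r => y r t) z ->
  ex_derive (fun r => pz x r t) z -> ex_derive (fun r => pz y r t) z ->
  is_derive (fun r => log_ratio_z x y r t) z (log_ratio_zz x y z t).
Proof.
  intros. unfold log_ratio_z, log_ratio_zz, pzz, pz.
  auto_derive; [repeat split; auto; lra | field; lra].
Qed.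

End LogRatioDerivatives.

Lemma continuous2_log_ratio x y z t : continuous2 x z t -> continuous2 y z t ->
  0 < x z t -> 0 < y z t -> continuous2 (log_ratio x y) z t.
Proof. intros. apply continuous2_minus; now apply continuous2_ln. Qed.

Definition reaction (x y w : R) : R :=
  4 * (y ^ 2 - x ^ 2) * (y ^ 2 + x ^ 2 - w ^ 2) / (x ^ 2 * y ^ 2 * w ^ 2).

Lemma reaction_neg x y w : 0 < y < x -> 0 < w <= x -> reaction x y w < 0.
Proof.
  intros Hyx Hw. unfold reaction, Rdiv.
  assert (0 < / (x ^ 2 * y ^ 2 * w ^ 2))
    by (apply Rinv_0_lt_compat; repeat apply Rmult_lt_0_compat; nra).
  assert (0 < (x ^ 2 - y ^ 2) * (y ^ 2 + x ^ 2 - w ^ 2)) by (apply Rmult_lt_0_compat; nra).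
  nra.
Qed.

Lemma ric_diag_comm p f g h z t : 0 < p z t -> 0 < g z t -> 0 < h z t ->
  ric_diag p f g h z t = ric_diag p f h g z t.
Proof. intros. unfold ric_diag. field. repeat split; lra. Qed.

Lemma ric_diag_log_ratio p x y w z t :
  0 < p z t -> 0 < x z t -> 0 < y z t -> 0 < w z t ->
  - ric_diag p x y w z t / x z t ^ 2 + ric_diag p y x w z t / y z t ^ 2 =
  log_ratio_zz x y z t / p z t ^ 2
  + log_ratio_z x y z t
    * (pz x z t / x z t + pz y z t / y z t + pz w z t / w z t - pz p z t / p z t) / p z t ^ 2
  + reaction (x z t) (y z t) (w z t).
Proof. intros. unfold ric_diag, log_ratio_zz, log_ratio_z, reaction. field. repeat split; lra. Qed.

Section RicciFlowSolution.
Variables (phi a b c : R -> R -> R) (T : Rbar) (t : R).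
Hypothesis HtT : Rbar_lt (Finite t) T.
Hypothesis Hsol : ricci_flow_sol phi a b c T.

Lemma before_T s : s <= t -> Rbar_lt (Finite s) T.
Proof. intros Hs. apply (Rbar_le_lt_trans _ (Finite t)); auto. Qed.

Lemma sol_pos z s : 0 <= s <= t -> 0 < phi z s /\ 0 < a z s /\ 0 < b z s /\ 0 < c z s.
Proof. intros Hs. destruct Hsol as (_ & _ & Hpos & _). apply Hpos; [lra | apply before_T; lra]. Qed.

Lemma sol_periodic z s : 0 <= s <= t ->
  a (z + 2 * PI) s = a z s /\ b (z + 2 * PI) s = b z s /\ c (z + 2 * PI) s = c z s.
Proof. intros Hs. destruct Hsol as (_ & Hper & _). apply Hper; [lra | apply before_T; lra]. Qed.

Lemma sol_regular f z s : f = phi \/ f = a \/ f = b \/ f = c -> 0 <= s <= t ->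
  ex_derive (fun x => f x s) z /\ ex_derive (fun x => pz f x s) z /\
  ex_derive (fun r => f z r) s /\ continuous2 f z s.
Proof.
  intros Hf Hs. destruct Hsol as [[eps [Heps Hsmooth]] _].
  assert (Hdom : - eps < s /\ Rbar_lt (Finite s) T) by (split; [lra | apply before_T; lra]).
  destruct (Hsmooth f Hf nil z s Hdom) as (Hz & Ht & Hc).
  destruct (Hsmooth f Hf (cons true nil) z s Hdom) as (Hzz & _).
  repeat split; assumption.
Qed.

Lemma coef_cases A : coef phi a b c A = phi \/ coef phi a b c A = a \/
  coef phi a b c A = b \/ coef phi a b c A = c.
Proof. destruct A as [|[|[|A]]]; simpl; tauto. Qed.

Lemma coef_rate A z s : (A < 4)%nat -> 0 <= s <= t ->
  pt (coef phi a b c A) z s = - ricci (ansatz phi a b c s) A A z / coef phi a b c A z s.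
Proof.
  intros HA Hs. destruct Hsol as (_ & _ & _ & Hflow).
  pose proof (Hflow z s ltac:(lra) (before_T s ltac:(lra)) A A HA HA) as H.
  unfold gm in H. rewrite Nat.eqb_refl in H.
  rewrite (Derive_ext _ (fun r => coef phi a b c A z r ^ 2)) in H by (intro; apply ansatz_coef).
  rewrite Derive_sq in H by apply (sol_regular _ z s (coef_cases A) Hs).
  assert (Hpos : 0 < coef phi a b c A z s)
    by (destruct (sol_pos z s Hs) as (?&?&?&?);
        destruct (coef_cases A) as [E|[E|[E|E]]]; rewrite E; auto).
  unfold pt. apply (Rmult_eq_reg_l (2 * coef phi a b c A z s)); [|lra].
  change (fun r => coef phi a b c A z r) with (coef phi a b c A z). rewrite H. field. lra.
Qed.

Section AtTime.
Variables (s : R).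
Hypothesis Hs : 0 <= s <= t.

Let regular f : f = phi \/ f = a \/ f = b \/ f = c -> forall z,
  ex_derive (fun x => f x s) z /\ ex_derive (fun x => pz f x s) z.
Proof. intros Hf z. destruct (sol_regular f z s Hf Hs) as (?&?&_). tauto. Qed.
Let pos z : 0 < phi z s /\ 0 < a z s /\ 0 < b z s /\ 0 < c z s := sol_pos z s Hs.

Lemma rate_a z : pt a z s = - ric_diag phi a b c z s / a z s.
Proof.
  rewrite <- (ricci_ansatz_11 phi a b c s regular pos). exact (coef_rate 1 z s ltac:(lia) Hs).
Qed.
Lemma rate_b z : pt b z s = - ric_diag phi b a c z s / b z s.
Proof.
  rewrite <- (ricci_ansatz_22 phi a b c s regular pos). exact (coef_rate 2 z s ltac:(lia) Hs).
Qed.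
Lemma rate_c z : pt c z s = - ric_diag phi c a b z s / c z s.
Proof.
  rewrite <- (ricci_ansatz_33 phi a b c s regular pos). exact (coef_rate 3 z s ltac:(lia) Hs).
Qed.
End AtTime.

Lemma log_ratio_rate x y w z s : 0 <= s <= t ->
  (x = c /\ y = a /\ w = b) \/ (x = a /\ y = c /\ w = b) \/ (x = b /\ y = c /\ w = a) ->
  log_ratio_t x y z s = log_ratio_zz x y z s / phi z s ^ 2
  + log_ratio_z x y z s
    * (pz x z s / x z s + pz y z s / y z s + pz w z s / w z s - pz phi z s / phi z s)
    / phi z s ^ 2
  + reaction (x z s) (y z s) (w z s).
Proof.
  intros Hs Hxyw. destruct (sol_pos z s Hs) as (?&?&?&?).
  assert (Hrate : pt x z s = - ric_diag phi x y w z s / x z s /\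
                  pt y z s = - ric_diag phi y x w z s / y z s).
  { destruct Hxyw as [(->&->&->)|[(->&->&->)|(->&->&->)]];
      rewrite ?rate_a, ?rate_b, ?rate_c by lra; split; f_equal; f_equal; apply ric_diag_comm; lra. }
  rewrite <- ric_diag_log_ratio by (destruct Hxyw as [(->&->&->)|[(->&->&->)|(->&->&->)]]; lra).
  unfold log_ratio_t. destruct Hrate as [-> ->].
  field. destruct Hxyw as [(->&->&->)|[(->&->&->)|(->&->&->)]]; lra.
Qed.

Lemma log_ratio_touch x y zb tb ep :
  (x = a \/ x = b \/ x = c) -> (y = a \/ y = b \/ y = c) -> 0 < tb <= t ->
  (forall z, log_ratio x y z tb <= log_ratio x y zb tb) ->
  (forall s, 0 <= s < tb -> log_ratio x y zb s - ep * s < log_ratio x y zb tb - ep * tb) ->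
  log_ratio_z x y zb tb = 0 /\ log_ratio_zz x y zb tb <= 0 /\ ep <= log_ratio_t x y zb tb.
Proof.
  intros Hx Hy Htb Hmax Hpast. assert (Hs : 0 <= tb <= t) by lra.
  assert (Hreg : forall f z, f = a \/ f = b \/ f = c ->
    0 < f z tb /\ ex_derive (fun r => f r tb) z /\ ex_derive (fun r => pz f r tb) z /\
    ex_derive (fun r => f z r) tb).
  { intros f z Hf. destruct (sol_regular f z tb ltac:(tauto) Hs) as (?&?&?&_).
    destruct (sol_pos z tb Hs) as (?&?&?&?). repeat split; auto.
    destruct Hf as [ -> | [ -> | -> ] ]; assumption. }
  assert (Hz : forall z, is_derive (fun r => log_ratio x y r tb) z (log_ratio_z x y z tb)).
  { intro z. destruct (Hreg x z Hx) as (?&?&_); destruct (Hreg y z Hy) as (?&?&_).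
    now apply is_derive_log_ratio_z. }
  assert (Hzz : is_derive (fun r => log_ratio_z x y r tb) zb (log_ratio_zz x y zb tb)).
  { destruct (Hreg x zb Hx) as (?&?&?&_); destruct (Hreg y zb Hy) as (?&?&?&_).
    now apply is_derive_log_ratio_zz. }
  assert (Ht : is_derive (fun s => log_ratio x y zb s - ep * s) tb (log_ratio_t x y zb tb - ep)).
  { destruct (Hreg x zb Hx) as (?&_&_&?); destruct (Hreg y zb Hy) as (?&_&_&?).
    unfold log_ratio, log_ratio_t, pt. auto_derive; [repeat split; auto | field; lra]. }
  split; [|split].
  - exact (max_is_derive_0 _ _ _ (Hz zb) Hmax).
  - exact (max_is_derive2_le0 _ _ _ _ Hz Hzz Hmax).
  - assert (0 <= log_ratio_t x y zb tb - ep); [|lra].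
    apply (left_max_is_derive_ge0 _ _ _ tb Ht); [lra|].
    intros s Hs'. apply Rlt_le, Hpast. lra.
Qed.

Lemma no_touch x y w zb tb ep : 0 < ep -> 0 < tb <= t ->
  (x = c /\ y = a /\ w = b) \/ (x = a /\ y = c /\ w = b) \/ (x = b /\ y = c /\ w = a) ->
  y zb tb < x zb tb -> w zb tb <= x zb tb ->
  (forall z, log_ratio x y z tb <= log_ratio x y zb tb) ->
  (forall s, 0 <= s < tb -> log_ratio x y zb s - ep * s < log_ratio x y zb tb - ep * tb) -> False.
Proof.
  intros Hep Htb Hxyw Hyx Hwx Hmax Hpast.
  destruct (sol_pos zb tb) as (?&?&?&?); [lra|].
  assert (Hyw : 0 < y zb tb /\ 0 < w zb tb)
    by (destruct Hxyw as [(->&->&->)|[(->&->&->)|(->&->&->)]]; lra).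
  destruct (log_ratio_touch x y zb tb ep) as (Hz & Hzz & Ht); auto;
    try (destruct Hxyw as [(->&->&->)|[(->&->&->)|(->&->&->)]]; tauto).
  rewrite (log_ratio_rate x y w zb tb), Hz in Ht by (auto; lra).
  assert (0 < / phi zb tb ^ 2) by (apply Rinv_0_lt_compat, pow_lt; lra).
  pose proof (reaction_neg (x zb tb) (y zb tb) (w zb tb) ltac:(lra) ltac:(lra)).
  unfold Rdiv in Ht. nra.
Qed.

Lemma continuous2_sol_log_ratio x y z s : 0 <= s <= t ->
  (x = a \/ x = b \/ x = c) -> (y = a \/ y = b \/ y = c) -> continuous2 (log_ratio x y) z s.
Proof.
  intros Hs Hx Hy. destruct (sol_pos z s Hs) as (?&?&?&?).
  apply continuous2_log_ratio; try apply (sol_regular _ z s); try tauto;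
    [destruct Hx as [ -> | [ -> | -> ] ] | destruct Hy as [ -> | [ -> | -> ] ]]; assumption.
Qed.

Lemma no_touch_over_c x w zb tb ep : 0 < ep -> 0 < tb <= t ->
  (x = a /\ w = b) \/ (x = b /\ w = a) ->
  0 < log_ratio x c zb tb -> log_ratio w c zb tb <= log_ratio x c zb tb ->
  (forall z, log_ratio x c z tb <= log_ratio x c zb tb) ->
  (forall s, 0 <= s < tb -> log_ratio x c zb s - ep * s < log_ratio x c zb tb - ep * tb) -> False.
Proof.
  intros Hep Htb Hxw Hpos Hwx. destruct (sol_pos zb tb) as (?&?&?&?); [lra|].
  assert (Hxw_pos : 0 < x zb tb /\ 0 < w zb tb) by (destruct Hxw as [(->&->)|(->&->)]; lra).
  unfold log_ratio in Hpos, Hwx.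
  apply (no_touch x c w zb tb ep); auto.
  - destruct Hxw as [(->&->)|(->&->)]; tauto.
  - apply ln_lt_inv; lra.
  - apply ln_le_inv; lra.
Qed.

Lemma c_dominates : (forall z, a z 0 <= b z 0 /\ b z 0 <= c z 0) ->
  forall z s, 0 <= s <= t -> a z s <= c z s /\ b z s <= c z s.
Proof.
  intros Hord z s Hs.
  set (G := fun z s => Rmax (log_ratio a c z s) (log_ratio b c z s)).
  assert (HG : G z s <= 0).
  { apply (max_principle G 0 t); auto; unfold G.
    - intros x r Hr. apply continuous2_Rmax; apply continuous2_sol_log_ratio; tauto.
    - intros x r Hr. unfold log_ratio. now destruct (sol_periodic x r Hr) as (->&->&->).
    - intro x. destruct (Hord x). destruct (sol_pos x 0) as (?&?&?&?); [lra|].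
      pose proof (ln_le (a x 0) (c x 0)). pose proof (ln_le (b x 0) (c x 0)).
      unfold log_ratio. apply Rmax_lub; lra.
    - intros ep zb tb Hep Htb HG0 Hmax Hpast.
      assert (Hbranch : forall x w, (x = a /\ w = b) \/ (x = b /\ w = a) ->
                G zb tb = log_ratio x c zb tb ->
                log_ratio w c zb tb <= log_ratio x c zb tb -> False).
      { intros x w Hxw HGx Hwx.
        assert (Hle : forall y r, log_ratio x c y r <= G y r)
          by (destruct Hxw as [(->&->)|(->&->)]; intros; [apply Rmax_l | apply Rmax_r]).
        unfold G in *. apply (no_touch_over_c x w zb tb ep); auto; try lra.
        - intro y. specialize (Hmax y). specialize (Hle y tb). lra.
        - intros r Hr. specialize (Hpast r Hr). specialize (Hle zb r). lra. }
      destruct (Rle_dec (log_ratio b c zb tb) (log_ratio a c zb tb)).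
      + apply (Hbranch a b); auto. unfold G. now rewrite Rmax_left.
      + apply (Hbranch b a); auto; [unfold G; rewrite Rmax_right|]; lra. }
  destruct (sol_pos z s Hs) as (?&?&?&?).
  unfold G, log_ratio in HG.
  pose proof (Rmax_l (ln (a z s) - ln (c z s)) (ln (b z s) - ln (c z s))).
  pose proof (Rmax_r (ln (a z s) - ln (c z s)) (ln (b z s) - ln (c z s))).
  split; apply ln_le_inv; lra.
Qed.

Lemma log_ratio_ca_bound (lambda : R) : (forall z, a z 0 <= b z 0 /\ b z 0 <= c z 0) ->
  1 <= lambda -> (forall z, c z 0 / a z 0 <= lambda) ->
  forall z s, 0 <= s <= t -> log_ratio c a z s <= ln lambda.
Proof.
  intros Hord Hl Hbnd z s Hs. assert (HL : 0 <= ln lambda) by (rewrite <- ln_1; apply ln_le; lra).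
  apply (max_principle (log_ratio c a) (ln lambda) t); [..| exact Hs].
  - intros x r Hr. apply continuous2_sol_log_ratio; tauto.
  - intros x r Hr. unfold log_ratio. now destruct (sol_periodic x r Hr) as (->&_&->).
  - intro x. destruct (sol_pos x 0) as (?&?&?&?); [lra|].
    unfold log_ratio. rewrite <- ln_div by lra. apply ln_le; [apply Rdiv_lt_0_compat|]; auto.
  - intros ep zb tb Hep Htb Hgt Hmax Hpast. destruct (sol_pos zb tb) as (?&?&?&?); [lra|].
    destruct (c_dominates Hord zb tb) as [_ Hbc]; [lra|].
    apply (no_touch c a b zb tb ep); auto.
    unfold log_ratio in Hgt. apply ln_lt_inv; lra.
Qed.
End RicciFlowSolution.

Theorem lemma3p2 (phi a b c : R -> R -> R) (T : Rbar) (lambda : R) :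
  Rbar_lt (Finite 0) T ->
  ricci_flow_sol phi a b c T ->
  (forall z, a z 0 <= b z 0 /\ b z 0 <= c z 0) ->
  1 <= lambda ->
  (exists z0, 1 <= c z0 0 / a z0 0) ->
  (forall z, c z 0 / a z 0 <= lambda) ->
  forall z t, 0 <= t -> Rbar_lt (Finite t) T ->
    1 <= c z t / a z t /\ c z t / a z t <= lambda.
Proof.
  intros _ Hsol Hord Hl _ Hbnd z t Ht HtT.
  assert (Hs : 0 <= t <= t) by lra.
  destruct (sol_pos phi a b c T t HtT Hsol z t Hs) as (_ & Ha & _ & Hc).
  destruct (c_dominates phi a b c T t HtT Hsol Hord z t Hs) as [Hac _].
  pose proof (log_ratio_ca_bound phi a b c T t HtT Hsol lambda Hord Hl Hbnd z t Hs) as Hln.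
  unfold log_ratio in Hln. rewrite <- ln_div in Hln by lra.
  split.
  - apply Rle_div_r; lra.
  - apply ln_le_inv; [apply Rdiv_lt_0_compat | | exact Hln]; lra.
Qed.
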